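(* Let $n\le 3$. For the house allocation setting with $n$ agents and $n$ houses described in the context, an assignment rule $f$ is support efficient if and only if it is ex post efficient.
   Context: Let $N$ be a set of $n$ agents and $H$ a set of $n$ houses. A preference profile $R$ assigns to each agent $i\in N$ a strict linear order $\succ_i$ over $H$; $\mathcal{R}$ denotes the set of all such profiles. A random assignment is a bistochastic $n\times n$ matrix $(M_{i,h})_{i\in N,h\in H}$ (nonnegative entries, all row and column sums equal to $1$); it is a deterministic assignment if all entries are in $\{0,1\}$. An assignment rule $f$ maps each $R\in\mathcal{R}$ to a random assignment $f(R)$; $f(R,i,h)$ is the probability that agent $i$ receives house $h$. A deterministic assignment $M$ is (Pareto) efficient at $R$ if there is no deterministic assignment $M'\ne M$ such that for all $i\in N$ and $h\neq h'$, $M'_{i,h'}=M_{i,h}=1$ implies $h'\succ_i h$. A rule $f$ is ex post efficient if for every $R$, $f(R)$ is a convex combination of deterministic assignments that are efficient at $R$. For a priority order $\pi$ of the agents, the serial dictatorship $SD_\pi$ lets agents in order $\pi$ successively pick their most preferred remaining house; random serial dictatorship is $RSD(R)=\frac{1}{n!}\sum_{\pi}SD_\pi(R)$, the sum over all $n!$ orders. A rule $f$ is support efficient if for all $R$, $i$, $h$: $RSD(R,i,h)=0$ implies $f(R,i,h)=0$. *)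

From HB Require Import structures.
From mathcomp Require Import all_boot all_order all_algebra all_fingroup.
Set Implicit Arguments. Unset Strict Implicit. Unset Printing Implicit Defensive.
Import Order.TTheory GRing.Theory Num.Theory.
Local Open Scope ring_scope.

(* Agents and houses are both 'I_n. A strict linear order over houses for
   agent i is represented by its ranking bijection: (P i) h = position of
   house h in agent i's order (0 = most preferred). *)
Definition profile (n : nat) := 'I_n -> {perm 'I_n}.

Definition prefers n (P : profile n) (i h' h : 'I_n) : bool := (P i h' < P i h)%N.

Definition bistochastic (R : numDomainType) n (M : 'M[R]_n) : Prop :=
  [/\ forall i h, 0 <= M i h,
      forall i, \sum_h M i h = 1
    & forall h, \sum_i M i h = 1].

Definition deterministic (R : numDomainType) n (M : 'M[R]_n) : Prop :=
  bistochastic M /\ forall i h, M i h = 0 \/ M i h = 1.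

Definition efficient_at (R : numDomainType) n (P : profile n) (M : 'M[R]_n) : Prop :=
  deterministic M /\
  ~ exists M' : 'M[R]_n, [/\ deterministic M', M' <> M &
      forall i h h', h != h' -> M' i h' = 1 -> M i h = 1 -> prefers P i h' h].

Definition ex_post_efficient (R : numDomainType) n (f : profile n -> 'M[R]_n) : Prop :=
  forall P, exists s : seq (R * 'M[R]_n),
    [/\ forall p, p \in s -> 0 <= p.1,
        \sum_(p <- s) p.1 = 1,
        forall p, p \in s -> efficient_at P p.2
      & f P = \sum_(p <- s) p.1 *: p.2].

Definition best_remaining n (P : profile n) (i : 'I_n) (taken : seq 'I_n) : option 'I_n :=
  ohead [seq h <- [seq (invg (P i)) k | k <- enum 'I_n] | h \notin taken].

Fixpoint sd_run n (P : profile n) (ord : seq 'I_n) (taken : seq 'I_n)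
  : seq ('I_n * 'I_n) :=
  match ord with
  | [::] => [::]
  | i :: ord' =>
    match best_remaining P i taken with
    | Some h => (i, h) :: sd_run P ord' (h :: taken)
    | None => sd_run P ord' taken
    end
  end.

Definition SD (R : numDomainType) n (pi : {perm 'I_n}) (P : profile n) : 'M[R]_n :=
  \matrix_(i, h) ((i, h) \in sd_run P [seq pi k | k <- enum 'I_n] [::])%:R.

Definition RSD (R : numFieldType) n (P : profile n) : 'M[R]_n :=
  (n`!%:R)^-1 *: \sum_(pi : {perm 'I_n}) SD R pi P.

Definition support_efficient (R : numFieldType) n (f : profile n -> 'M[R]_n) : Prop :=
  forall P i h, RSD R P i h = 0 -> f P i h = 0.

From mathcomp Require Import all_boot all_order all_algebra perm.
From mathcomp Require Import zify lra.
Set Implicit Arguments. Unset Strict Implicit. Unset Printing Implicit Defensive.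
Import Order.TTheory GRing.Theory Num.Theory.

(* Deterministic assignments are permutation matrices, and an efficient one is
   the outcome of a serial dictatorship: some remaining agent always holds its
   favourite remaining house, since otherwise trading along a cycle of the map
   "owner of my favourite remaining house" would be a Pareto improvement. So an
   ex post efficient rule only uses pairs that RSD uses.
   Conversely, for n <= 3 a bistochastic matrix is a convex combination of
   permutation matrices supported on its positive entries, and a permutation
   whose pairs all occur in serial dictatorships is efficient: an improvement
   is a trading cycle of length 2 or 3, and asking who took the coveted houses
   earlier in those serial dictatorships yields, for a swap, two further
   distinct agents (four in all), and for a 3-cycle a contradiction. *)

Lemma ohead_filter_Some (T : eqType) (p : pred T) (s : seq T) x :
  ohead (filter p s) = Some x ->
  exists s1 s2, [/\ s = s1 ++ x :: s2, p x & all (predC p) s1].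
Proof.
elim: s => [|y s IHs] //=; case: ifP => py /=.
  by case=> <-; exists [::], s.
case/IHs=> s1 [s2 [-> px s1Np]]; exists (y :: s1), s2.
by rewrite /= py s1Np.
Qed.

Lemma map_uniq_inj_in (T1 T2 : eqType) (f : T1 -> T2) (s : seq T1) :
  uniq (map f s) -> {in s &, injective f}.
Proof.
elim: s => [|y s IHs] //= /andP[fy_s Us] x z.
rewrite !in_cons => /predU1P[->|xs] /predU1P[->|zs] // Efxz.
- by move: fy_s; rewrite Efxz map_f.
- by move: fy_s; rewrite -Efxz map_f.
- exact: IHs.
Qed.

Lemma split_at_index (T : eqType) (s : seq T) x : x \in s ->
  s = take (index x s) s ++ x :: drop (index x s).+1 s.
Proof.
by move=> xs; rewrite -{1}(cat_take_drop (index x s) s) (drop_nth x) ?index_mem ?nth_index.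
Qed.

Lemma fixfree_cycle_perm (T : finType) (Q : pred T) (g : T -> T) a : Q a ->
  (forall x, Q x -> Q (g x)) -> (forall x, Q x -> g x != x) ->
  exists2 rho : {perm T}, (forall x, rho x != x -> Q x /\ rho x = g x) & exists x, rho x != x.
Proof.
move=> Qa Qg g_fixfree.
have Q_iter k x : Q x -> Q (iter k g x) by move=> Qx; elim: k => //= k; apply: Qg.
have /trajectP[i lt_i Eloop] := looping_order g a.
set x0 := iter i g a in Eloop.
have x0_cycle : fcycle g (orbit g x0).
  apply/(@orbitPcycle _ g x0 3 0); exists (order g a - i).-1.
  by rewrite prednK ?subn_gt0 // -iterD subnK ?Eloop // ltnW.
have x0_orbit x : x \in orbit g x0 -> Q x.
  by case/trajectP=> k _ ->; apply/Q_iter/Q_iter.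
(* [rho] moves the points of the g-cycle through [x0] one step and fixes the rest. *)
pose rho := perm (can_inj (prev_next (orbit_uniq g x0))).
have Erho x : x \in orbit g x0 -> rho x = g x.
  by move=> x_orbit; rewrite permE; apply/esym/eqP/(next_cycle x0_cycle).
exists rho; last by exists x0; rewrite Erho ?in_orbit ?g_fixfree ?x0_orbit ?in_orbit.
move=> x; have [x_orbit _|x_orbit] := boolP (x \in orbit g x0).
  by rewrite Erho //; split; first exact: x0_orbit.
by rewrite permE next_nth (negbTE x_orbit) eqxx.
Qed.

Section Preferences.
Variables (n : nat) (P : profile n).
Implicit Types (i : 'I_n) (h : 'I_n) (t : seq 'I_n).

Lemma prefers_neq i h h' : prefers P i h h' -> h != h'.
Proof. by apply: contraTneq => ->; rewrite /prefers ltnn. Qed.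

Lemma prefers_asym i h h' : prefers P i h h' -> ~~ prefers P i h' h.
Proof. by rewrite /prefers -leqNgt => /ltnW. Qed.

Lemma prefers_total i h h' : h != h' -> ~~ prefers P i h h' -> prefers P i h' h.
Proof.
rewrite /prefers -leqNgt leq_eqVlt => neq_hh' /orP[|//].
by rewrite (inj_eq val_inj) (inj_eq perm_inj) eq_sym (negbTE neq_hh').
Qed.

Lemma prefers_trans i h1 h2 h3 :
  prefers P i h1 h2 -> prefers P i h2 h3 -> prefers P i h1 h3.
Proof. exact: ltn_trans. Qed.

Lemma index_rank i h : index h [seq (P i)^-1%g k | k <- enum 'I_n] = P i h.
Proof. by rewrite -{1}(permK (P i) h) index_map ?index_enum_ord //; apply: perm_inj. Qed.

Lemma best_remaining_Some i t h : best_remaining P i t = Some h ->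
  h \notin t /\ forall h', h' \notin t -> ~~ prefers P i h' h.
Proof.
case/ohead_filter_Some=> s1 [s2 [Es ht s1t]]; split=> // h' h't.
have notin_s1 y : y \notin t -> y \notin s1.
  by move=> yt; apply: contra yt => /(allP s1t) /negPn.
rewrite /prefers -leqNgt -!index_rank Es !index_cat.
by rewrite (negbTE (notin_s1 _ ht)) (negbTE (notin_s1 _ h't)) /= eqxx addn0 leq_addr.
Qed.

Lemma best_remaining_None i t : best_remaining P i t = None -> forall h, h \in t.
Proof.
rewrite /best_remaining => Enone h; apply: contraT => ht.
have : h \in [seq h <- [seq (P i)^-1%g k | k <- enum 'I_n] | h \notin t].
  by rewrite mem_filter ht /= -{1}(permK (P i) h) map_f ?mem_enum.
by case: [seq _ <- _ | _] Enone.
Qed.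

End Preferences.

Section SerialDictatorship.
Variables (n : nat) (P : profile n).
Implicit Types (o t : seq 'I_n) (x h : 'I_n).

Lemma sd_run_cat o1 o2 t :
  sd_run P (o1 ++ o2) t =
  sd_run P o1 t ++ sd_run P o2 (rev (map snd (sd_run P o1 t)) ++ t).
Proof.
elim: o1 t => [|i o1 IHo] t //=.
by case: best_remaining => [h|] //=; rewrite IHo rev_cons cat_rcons.
Qed.

Lemma sd_run_best o t r1 x h r2 : sd_run P o t = r1 ++ (x, h) :: r2 ->
  forall h', h' \notin t -> h' \notin map snd r1 -> ~~ prefers P x h' h.
Proof.
elim: o t r1 => [|i o IHo] t r1 /=; first by case: r1.
case Ebest: best_remaining => [h0|]; last exact: IHo.
case: r1 => [|q r1] /=.
  by case=> <- <- _ h' h't _; case: (best_remaining_Some Ebest) => _; apply.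
case=> <- /IHo best_x h' h't; rewrite in_cons negb_or => /andP[h'h0 h'r1].
by apply: best_x; rewrite // in_cons negb_or h'h0.
Qed.

Lemma uniq_sd_run_houses o t : uniq t -> uniq (map snd (sd_run P o t) ++ t).
Proof.
elim: o t => [|i o IHo] t //= Ut.
case Ebest: best_remaining => [h|]; last exact: IHo.
have [ht _] := best_remaining_Some Ebest.
move: (IHo (h :: t)); rewrite /= ht Ut => /(_ isT).
by rewrite -[h :: t]/([:: h] ++ t) uniq_catCA.
Qed.

Lemma subseq_sd_run_agents o t : subseq (map fst (sd_run P o t)) o.
Proof.
elim: o t => [|i o IHo] t //=.
case: best_remaining => [h|] /=; first by rewrite eqxx.
exact: subseq_trans (IHo t) (subseq_cons o i).
Qed.

Section Run.
Variable o : seq 'I_n.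
Hypothesis Uo : uniq o.
Let run := sd_run P o [::].
Let before p q := (index p run < index q run)%N.

Lemma sd_run_houses_inj : {in run &, injective snd}.
Proof.
apply: map_uniq_inj_in.
by have := uniq_sd_run_houses o (erefl : uniq [::]); rewrite cats0.
Qed.

Lemma sd_run_agents_inj : {in run &, injective fst}.
Proof. exact/map_uniq_inj_in/(subseq_uniq (subseq_sd_run_agents o [::])). Qed.

Lemma sd_run_taken_before x h h' : (x, h) \in run -> prefers P x h' h ->
  exists2 y, (y, h') \in run & before (y, h') (x, h).
Proof.
move=> /split_at_index Erun xh'h.
have : h' \in map snd (take (index (x, h) run) run).
  by apply: contraT => /(sd_run_best Erun); rewrite xh'h => /(_ isT).
case/mapP=> [[y h'']] yh_take /= ->; exists y; first exact: mem_take yh_take.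
exact: index_ltn.
Qed.

Lemma sd_run_earlier_no_envy y h1 x h2 : (y, h1) \in run -> (x, h2) \in run ->
  before (y, h1) (x, h2) -> ~~ prefers P y h2 h1.
Proof.
move=> /split_at_index Erun xh_run lt_yx.
apply: (sd_run_best Erun) => //; apply/mapP=> -[q q_take Eh2].
have Eq : q = (x, h2) by apply: sd_run_houses_inj => //; apply: mem_take q_take.
by move: (index_ltn q_take); rewrite Eq => /(ltn_trans lt_yx); rewrite ltnn.
Qed.

Lemma sd_run_envied x h h' : (x, h) \in run -> prefers P x h' h ->
  exists y, [/\ (y, h') \in run, before (y, h') (x, h), y != x & prefers P y h' h].
Proof.
move=> xh_run xh'h; have [y yh'_run lt_yx] := sd_run_taken_before xh_run xh'h.
exists y; split=> //.
  apply: contraTneq xh'h => Eyx; have /(congr1 snd) /= -> : (y, h') = (x, h).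
    by apply: sd_run_agents_inj; rewrite //= Eyx.
  by rewrite /prefers ltnn.
apply: prefers_total (sd_run_earlier_no_envy yh'_run xh_run lt_yx).
by rewrite eq_sym (prefers_neq xh'h).
Qed.

Lemma sd_run_three_cycle a b c ha hb hc : (a, ha) \in run ->
  (forall y, y \in [:: a; b; c]) ->
  prefers P a hb ha -> prefers P b hc hb -> prefers P c ha hc ->
  prefers P c hb ha.
Proof.
(* The taker of hb precedes a; were it b, the taker of hc would precede b, and
   could only be c, who would have passed over the still available ha. *)
move=> aha_run abc ahb bhc cha.
have [y [yhb_run lt_ya neq_ya yhb]] := sd_run_envied aha_run ahb.
move: (abc y); rewrite !inE (negbTE neq_ya) /= => /orP[/eqP Eyb|/eqP Eyc]; last by rewrite -Eyc.
rewrite {}Eyb in yhb_run lt_ya.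
have [z [zhc_run lt_zb neq_zb _]] := sd_run_envied yhb_run bhc.
move: (abc z); rewrite !inE (negbTE neq_zb) /= => /orP[/eqP Eza|/eqP Ezc].
  have /(congr1 snd) /= Ehc : (z, hc) = (a, ha).
    by apply: sd_run_agents_inj; rewrite //= Eza.
  by move: (prefers_neq cha); rewrite Ehc eqxx.
rewrite {}Ezc in zhc_run lt_zb.
by move: (sd_run_earlier_no_envy zhc_run aha_run (ltn_trans lt_zb lt_ya)); rewrite cha.
Qed.

End Run.
End SerialDictatorship.

Definition pareto_optimal n (P : profile n) (s : {perm 'I_n}) : Prop :=
  forall t : {perm 'I_n}, (forall i, t i != s i -> prefers P i (t i) (s i)) -> t = s.

Definition sd_picks n (P : profile n) (pi : {perm 'I_n}) : seq ('I_n * 'I_n) :=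
  sd_run P [seq pi k | k <- enum 'I_n] [::].

Lemma uniq_perm_enum n (pi : {perm 'I_n}) : uniq [seq pi k | k <- enum 'I_n].
Proof. by rewrite map_inj_uniq ?enum_uniq //; apply: perm_inj. Qed.

Lemma sd_picks_envied n (P : profile n) pi x h h' :
  (x, h) \in sd_picks P pi -> prefers P x h' h -> exists2 y, y != x & prefers P y h' h.
Proof.
move=> /(sd_run_envied (uniq_perm_enum pi)) envied /envied[y [_ _ neq_yx yh'h]].
by exists y.
Qed.

Lemma sd_picks_no_trade3 n (P : profile n) pi1 pi2 pi3 x y z hx hy hz :
  (forall w, w \in [:: x; y; z]) ->
  (x, hx) \in sd_picks P pi1 -> (y, hy) \in sd_picks P pi2 -> (z, hz) \in sd_picks P pi3 ->
  prefers P x hy hx -> prefers P y hz hy -> prefers P z hx hz -> False.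
Proof.
move=> xyz x_hx y_hy z_hz x_hy_hx y_hz_hy z_hx_hz.
have yzx w : w \in [:: y; z; x] by rewrite -[[:: y; z; x]]/(rot 1 [:: x; y; z]) mem_rot.
have zxy w : w \in [:: z; x; y] by rewrite -[[:: z; x; y]]/(rot 2 [:: x; y; z]) mem_rot.
have x_hz_hy := sd_run_three_cycle (uniq_perm_enum pi2) y_hy yzx y_hz_hy z_hx_hz x_hy_hx.
have y_hx_hz := sd_run_three_cycle (uniq_perm_enum pi3) z_hz zxy z_hx_hz x_hy_hx y_hz_hy.
have [w neq_wx w_hz_hx] := sd_picks_envied x_hx (prefers_trans x_hz_hy x_hy_hx).
move: (xyz w) w_hz_hx; rewrite !inE (negbTE neq_wx) /=.
by case/orP=> /eqP-> /prefers_asym; rewrite ?y_hx_hz ?z_hx_hz.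
Qed.

Section AtMostThree.
Variable n : nat.
Hypothesis le_n3 : (n <= 3)%N.

Lemma mem_three_distinct (a b c : 'I_n) : a != b -> a != c -> b != c ->
  forall w, w \in [:: a; b; c].
Proof.
move=> + + + w; rewrite !inE -!val_eqE /=.
by move: (ltn_ord a) (ltn_ord b) (ltn_ord c) (ltn_ord w) => *; lia.
Qed.

Lemma fixfree_small_cycle (Q : pred 'I_n) (g : 'I_n -> 'I_n) a : Q a ->
  (forall x, Q x -> Q (g x)) -> (forall x, Q x -> g x != x) ->
  (exists x y, [/\ x != y, Q x, Q y, g x = y & g y = x]) \/
  (exists x y z, [/\ forall w, w \in [:: x; y; z], [&& Q x, Q y & Q z],
                    g x = y, g y = z & g z = x]).
Proof.
move=> Qa Qg g_fixfree.
have Qga := Qg _ Qa; have Qgga := Qg _ Qga.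
have ga := g_fixfree _ Qa; have gga := g_fixfree _ Qga; have ggga := g_fixfree _ Qgga.
have [g2a|ne2a] := eqVneq (g (g a)) a; first by left; exists a, (g a); rewrite eq_sym.
have [g3ga|ne3ga] := eqVneq (g (g (g a))) (g a).
  by left; exists (g a), (g (g a)); rewrite eq_sym.
rewrite eq_sym in ga; rewrite eq_sym in ne2a; rewrite eq_sym in gga.
have cover := mem_three_distinct ga ne2a gga.
right; exists a, (g a), (g (g a)); split=> //; first by rewrite Qa Qga.
by move: (cover (g (g (g a)))); rewrite !inE (negbTE ne3ga) (negbTE ggga) /= orbF => /eqP.
Qed.

Lemma sd_picks_no_swap (P : profile n) pi1 pi2 x y hx hy : x != y ->
  (x, hx) \in sd_picks P pi1 -> (y, hy) \in sd_picks P pi2 ->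
  prefers P x hy hx -> prefers P y hx hy -> False.
Proof.
move=> neq_xy x_hx y_hy x_hy_hx y_hx_hy.
have [w neq_wx w_hy_hx] := sd_picks_envied x_hx x_hy_hx.
have [w' neq_w'y w'_hx_hy] := sd_picks_envied y_hy y_hx_hy.
have neq_wy : w != y by apply: contraTneq w_hy_hx => ->; apply: prefers_asym.
have neq_w'x : w' != x by apply: contraTneq w'_hx_hy => ->; apply: prefers_asym.
have neq_ww' : w != w' by apply: contraTneq w_hy_hx => ->; apply: prefers_asym.
rewrite eq_sym in neq_wx; rewrite eq_sym in neq_wy; rewrite eq_sym in neq_ww'.
move: (mem_three_distinct neq_xy neq_wx neq_wy w').
by rewrite !inE (negbTE neq_w'x) (negbTE neq_w'y) (negbTE neq_ww').
Qed.

Lemma sd_supported_pareto (P : profile n) (s : {perm 'I_n}) :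
  (forall i, exists pi, (i, s i) \in sd_picks P pi) -> pareto_optimal P s.
Proof.
move=> s_picked t t_dom; apply/permP => a.
have [//|moved_a] := eqVneq (t a) (s a); exfalso.
pose g i := (s^-1)%g (t i).
have Etg i : t i = s (g i) by rewrite permKV.
have g_fixfree x : t x != s x -> g x != x.
  by move=> moved_x; apply: contra moved_x => /eqP gx; rewrite Etg gx.
have moved_g x : t x != s x -> t (g x) != s (g x).
  by move=> /g_fixfree; apply: contra; rewrite -Etg => /eqP/perm_inj ->.
have pref x : t x != s x -> prefers P x (s (g x)) (s x) by move=> /t_dom; rewrite Etg.
have [[x [y [neq_xy mx my gx gy]]]|[x [y [z [xyz /and3P[mx my mz] gx gy gz]]]]] :=
  fixfree_small_cycle moved_a moved_g g_fixfree.
- have [pi1 x_sx] := s_picked x; have [pi2 y_sy] := s_picked y.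
  move: (pref _ mx) (pref _ my); rewrite gx gy.
  exact: sd_picks_no_swap neq_xy x_sx y_sy.
- have [pi1 x_sx] := s_picked x; have [pi2 y_sy] := s_picked y; have [pi3 z_sz] := s_picked z.
  move: (pref _ mx) (pref _ my) (pref _ mz); rewrite gx gy gz.
  exact: sd_picks_no_trade3 xyz x_sx y_sy z_sz.
Qed.

End AtMostThree.

Lemma exists_perm_enum n (o : seq 'I_n) : uniq o -> size o = n ->
  exists pi : {perm 'I_n}, [seq pi k | k <- enum 'I_n] = o.
Proof.
case: o => [|x0 o'] Uo size_o; first by exists 1%g; rewrite -size_o enum_ord0.
have nth_inj : injective (fun k : 'I_n => nth x0 (x0 :: o') k).
  by move=> k1 k2 /eqP; rewrite nth_uniq ?size_o // => /eqP/val_inj.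
exists (perm nth_inj); apply: (@eq_from_nth _ x0); rewrite size_map size_enum_ord ?size_o //.
by move=> k lt_k; rewrite (nth_map x0) ?size_enum_ord // permE nth_enum_ord.
Qed.

Section ParetoIsSerialDictatorship.
Variables (n : nat) (P : profile n) (s : {perm 'I_n}).
Hypothesis Ps : pareto_optimal P s.

Lemma pareto_sd_next_pick (done : seq 'I_n) a : a \notin done ->
  exists2 x, x \notin done & best_remaining P x (rev (map s done)) = Some (s x).
Proof.
set taken := rev (map s done) => a_done.
have [/existsP[x /andP[x_done /eqP Ex]]|/existsPn no_pick] :=
  boolP [exists x, (x \notin done) && (best_remaining P x taken == Some (s x))].
  by exists x.
have s_taken x : x \notin done -> s x \notin taken.
  by move=> x_done; rewrite mem_rev mem_map //; apply: perm_inj.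
pose hx x := odflt (s x) (best_remaining P x taken).
have Ehx x : x \notin done -> best_remaining P x taken = Some (hx x).
  move=> x_done; rewrite /hx; case Ebest: best_remaining => [h|] //.
  by move: (s_taken x x_done); rewrite (best_remaining_None Ebest).
have pref x : x \notin done -> prefers P x (hx x) (s x).
  move=> x_done; have [_ best_x] := best_remaining_Some (Ehx x x_done).
  apply: prefers_total (best_x _ (s_taken x x_done)).
  by move: (no_pick x); rewrite x_done (Ehx x x_done); apply: contra => /eqP->; rewrite eqxx.
pose g x := (s^-1)%g (hx x).
have Esg x : s (g x) = hx x by rewrite permKV.
have Qg x : x \notin done -> g x \notin done.
  move=> x_done; have [+ _] := best_remaining_Some (Ehx x x_done).
  by apply: contra => gx_done; rewrite -Esg mem_rev map_f.
have g_fixfree x : x \notin done -> g x != x.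
  by move=> /pref; apply: contraTneq => gx; rewrite -Esg gx /prefers ltnn.
have [rho rho_g [x0 rho_x0]] :=
  fixfree_cycle_perm (Q := [pred x | x \notin done]) a_done Qg g_fixfree.
have /permP/(_ x0) : (rho * s)%g = s.
  apply: Ps => i; rewrite permM => moved_i.
  have [i_done ->] : (i \notin done) /\ rho i = g i.
    by apply: rho_g; apply: contra moved_i => /eqP->.
  by rewrite Esg; apply: pref.
by rewrite permM => /perm_inj/eqP; rewrite (negbTE rho_x0).
Qed.

Lemma pareto_sd_prefix k : (k <= n)%N -> exists o : seq 'I_n,
  [/\ uniq o, size o = k & sd_run P o [::] = [seq (x, s x) | x <- o]].
Proof.
elim: k => [|k IHk] lt_kn; first by exists [::].
have [o [Uo size_o Eo]] := IHk (ltnW lt_kn).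
have [a a_o] : exists a, a \notin o.
  apply/existsP; apply: contraLR lt_kn => /existsPn o_full.
  rewrite -leqNgt -size_o -[X in (X <= _)%N](size_enum_ord n) uniq_leq_size ?enum_uniq //.
  by move=> x _; apply/negPn/o_full.
have [x x_o Ex] := pareto_sd_next_pick a_o.
exists (o ++ [:: x]); rewrite cat_uniq Uo /= orbF x_o size_cat size_o addn1.
have Eo_houses : map snd [seq (y, s y) | y <- o] = map s o by rewrite -map_comp.
by rewrite sd_run_cat Eo map_cat Eo_houses cats0 /= Ex.
Qed.

Lemma pareto_sd_reachable i : exists pi, (i, s i) \in sd_picks P pi.
Proof.
have [o [Uo size_o Eo]] := pareto_sd_prefix (leqnn n).
have [pi Epi] := exists_perm_enum Uo size_o.
exists pi; rewrite /sd_picks Epi Eo; apply: (map_f (fun x => (x, s x))).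
by rewrite -Epi -[i](permKV pi) map_f ?mem_enum.
Qed.

End ParetoIsSerialDictatorship.

Local Open Scope ring_scope.

Section DeterministicAssignments.
Variables (R : numDomainType) (n : nat).
Implicit Types (s t : {perm 'I_n}) (M : 'M[R]_n).

Lemma perm_mxE s i j : perm_mx s i j = (s i == j)%:R :> R.
Proof. by rewrite !mxE. Qed.

Lemma natr_bool_eq1 (b : bool) : b%:R = 1 :> R -> b.
Proof. by case: b => // /eqP; rewrite eq_sym oner_eq0. Qed.

Lemma perm_mx_eq1 s i j : perm_mx s i j = 1 :> R -> s i = j.
Proof. by rewrite perm_mxE => /natr_bool_eq1/eqP. Qed.

Lemma perm_mx_inj : injective (@perm_mx R n).
Proof. by move=> s t Est; apply/permP => i; apply: perm_mx_eq1; rewrite Est perm_mxE eqxx. Qed.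

Lemma sum01_eq1 (F : 'I_n -> R) : (forall j, F j = 0 \/ F j = 1) ->
  \sum_j F j = 1 -> exists j, forall k, F k = (k == j)%:R.
Proof.
move=> F01 sumF.
have F_ge0 k : 0 <= F k by case: (F01 k) => ->; rewrite ?ler01.
have [j Fj] : exists j, F j = 1.
  case: (pickP (fun j => F j == 1)) => [j /eqP|no_one]; first by exists j.
  move: sumF; rewrite big1 => [/eqP|k _]; first by rewrite eq_sym oner_eq0.
  by case: (F01 k) => // Fk; move: (no_one k); rewrite Fk eqxx.
exists j => k; have [->|neq_kj] := eqVneq k j; first by rewrite Fj.
move: sumF; rewrite (bigD1 j) //= Fj -[RHS]addr0 => /addrI rest0.
by rewrite (psumr_eq0P (fun k _ => F_ge0 k) rest0).
Qed.

Lemma deterministic_perm_mx s : deterministic (perm_mx s : 'M[R]_n).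
Proof.
split=> [|i j]; last by rewrite perm_mxE; case: (s i == j); [right | left].
split=> [i j|i|j]; first by rewrite perm_mxE ler0n.
  rewrite (bigD1 (s i)) //= perm_mxE eqxx big1 ?addr0 // => j neq_js.
  by rewrite perm_mxE eq_sym (negbTE neq_js).
rewrite (bigD1 (s^-1 j)%g) //= perm_mxE permKV eqxx big1 ?addr0 // => i neq_i.
by rewrite perm_mxE; case: eqP => // Esi; move: neq_i; rewrite -Esi permK eqxx.
Qed.

Lemma deterministic_perm_mxP M : deterministic M <-> exists s, M = perm_mx s.
Proof.
split=> [[[_ Mrow Mcol] M01]|[s ->]]; last exact: deterministic_perm_mx.
have /fin_all_exists[f Mf] i : exists j, forall k, M i k = (k == j)%:R.
  exact: sum01_eq1 (M01 i) (Mrow i).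
have f_inj : injective f.
  move=> i i' Ef; have [i0 Mi0] := sum01_eq1 (fun k => M01 k (f i)) (Mcol (f i)).
  have /natr_bool_eq1/eqP-> : (i == i0)%:R = 1 :> R by rewrite -Mi0 Mf eqxx.
  by apply/esym/eqP/natr_bool_eq1; rewrite -Mi0 Ef Mf eqxx.
by exists (perm f_inj); apply/matrixP => i k; rewrite perm_mxE permE Mf eq_sym.
Qed.

Lemma efficient_at_perm_mx (P : profile n) s :
  efficient_at P (perm_mx s : 'M[R]_n) <-> pareto_optimal P s.
Proof.
split=> [[_ no_improvement] t t_dom | Ps].
  have [//|neq_ts] := eqVneq t s; case: no_improvement.
  exists (perm_mx t); split; first exact: deterministic_perm_mx.
    by apply: contraNnot neq_ts => /perm_mx_inj->.
  move=> i h h' neq_hh' /perm_mx_eq1 Eh' /perm_mx_eq1 Eh; subst h h'.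
  by apply: t_dom; rewrite eq_sym.
split=> [|[M' [/deterministic_perm_mxP[t ->] neq_ts dom]]]; first exact: deterministic_perm_mx.
apply/neq_ts; congr perm_mx; apply: Ps => i moved_i.
by apply: dom; rewrite 1?eq_sym // perm_mxE eqxx.
Qed.

End DeterministicAssignments.

Lemma RSD_eq0 (R : numFieldType) n (P : profile n) i h :
  RSD R P i h = 0 <-> forall pi, (i, h) \notin sd_picks P pi.
Proof.
have fact_neq0 : n`!%:R != 0 :> R by rewrite pnatr_eq0 -lt0n fact_gt0.
rewrite /RSD mxE summxE; under eq_bigr do rewrite mxE.
split.
  move/eqP; rewrite mulf_eq0 invr_eq0 (negbTE fact_neq0) /= => /eqP sum0 pi.
  have := psumr_eq0P (fun pi _ => ler0n R _) sum0 (i := pi) isT.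
  by rewrite /sd_picks; case: (_ \in _) => // /eqP; rewrite oner_eq0.
by move=> no_pick; rewrite big1 ?mulr0 // => pi _; rewrite (negbTE (no_pick pi)).
Qed.

Section Birkhoff.
Variable R : realFieldType.

Definition scaled_bistochastic n (c : R) (M : 'M[R]_n) : Prop :=
  [/\ forall i j, 0 <= M i j, forall i, \sum_j M i j = c & forall j, \sum_i M i j = c].

Lemma positive_diagonal2_real (c a00 a01 a10 a11 : R) :
  0 < c -> 0 <= a00 -> 0 <= a01 -> 0 <= a10 -> 0 <= a11 ->
  a00 + a01 = c -> a10 + a11 = c -> a00 + a10 = c -> a01 + a11 = c ->
  (0 < a00 /\ 0 < a11) \/ (0 < a01 /\ 0 < a10).
Proof. by move=> *; lra. Qed.

Lemma positive_diagonal3_real (c a00 a01 a02 a10 a11 a12 a20 a21 a22 : R) :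
  0 < c -> 0 <= a00 -> 0 <= a01 -> 0 <= a02 -> 0 <= a10 -> 0 <= a11 -> 0 <= a12 ->
  0 <= a20 -> 0 <= a21 -> 0 <= a22 ->
  a00 + a01 + a02 = c -> a10 + a11 + a12 = c -> a20 + a21 + a22 = c ->
  a00 + a10 + a20 = c -> a01 + a11 + a21 = c -> a02 + a12 + a22 = c ->
  (0 < a00 /\ 0 < a11 /\ 0 < a22) \/ (0 < a00 /\ 0 < a12 /\ 0 < a21) \/
  (0 < a01 /\ 0 < a10 /\ 0 < a22) \/ (0 < a01 /\ 0 < a12 /\ 0 < a20) \/
  (0 < a02 /\ 0 < a10 /\ 0 < a21) \/ (0 < a02 /\ 0 < a11 /\ 0 < a20).
Proof. by move=> *; lra. Qed.

Definition ord2_0 : 'I_2 := @Ordinal 2 0 isT.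
Definition ord2_1 : 'I_2 := @Ordinal 2 1 isT.
Definition ord3_0 : 'I_3 := @Ordinal 3 0 isT.
Definition ord3_1 : 'I_3 := @Ordinal 3 1 isT.
Definition ord3_2 : 'I_3 := @Ordinal 3 2 isT.

Lemma ord2P (i : 'I_2) : i = ord2_0 \/ i = ord2_1.
Proof. by case: i => [[|[|//]] lt_i]; [left | right]; apply: val_inj. Qed.

Lemma ord3P (i : 'I_3) : [\/ i = ord3_0, i = ord3_1 | i = ord3_2].
Proof.
by case: i => [[|[|[|//]]] lt_i]; [apply: Or31 | apply: Or32 | apply: Or33]; apply: val_inj.
Qed.

Lemma sum_ord2 (F : 'I_2 -> R) : \sum_i F i = F ord2_0 + F ord2_1.
Proof. by rewrite !big_ord_recl big_ord0 addr0; congr (F _ + F _); apply: val_inj. Qed.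

Lemma sum_ord3 (F : 'I_3 -> R) : \sum_i F i = F ord3_0 + F ord3_1 + F ord3_2.
Proof.
by rewrite !big_ord_recl big_ord0 addr0 addrA; congr (F _ + F _ + F _); apply: val_inj.
Qed.

Lemma perm3_of_distinct (a b c : 'I_3) : a != b -> a != c -> b != c ->
  exists s : {perm 'I_3}, [/\ s ord3_0 = a, s ord3_1 = b & s ord3_2 = c].
Proof.
move=> neq_ab neq_ac neq_bc.
have Uabc : uniq [:: a; b; c] by rewrite /= !inE negb_or neq_ab neq_ac neq_bc.
have nth_inj : injective (fun i : 'I_3 => nth a [:: a; b; c] i).
  by move=> i j /eqP; rewrite nth_uniq // => /eqP/val_inj.
by exists (perm nth_inj); rewrite !permE.
Qed.

(* Frobenius-Koenig for n <= 3, where it is a fact of linear arithmetic. *)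
Lemma positive_diagonal_le3 n (M : 'M[R]_n) c : (n <= 3)%N -> 0 < c ->
  scaled_bistochastic c M -> exists s : {perm 'I_n}, forall i, 0 < M i (s i).
Proof.
case: n M => [|[|[|[|//]]]] M _ c_gt0 [M_ge0 Mrow Mcol].
- by exists 1%g => -[].
- by exists 1%g => i; rewrite perm1 (ord1 i); move: (Mrow ord0); rewrite big_ord1 => ->.
- move: (Mrow ord2_0) (Mrow ord2_1) (Mcol ord2_0) (Mcol ord2_1).
  rewrite !sum_ord2 => row0 row1 col0 col1.
  have [[p00 p11]|[p01 p10]] := positive_diagonal2_real c_gt0 (M_ge0 _ _) (M_ge0 _ _)
    (M_ge0 _ _) (M_ge0 _ _) row0 row1 col0 col1.
  + by exists 1%g => i; rewrite perm1; case: (ord2P i) => ->.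
  + by exists (tperm ord2_0 ord2_1) => i; case: (ord2P i) => ->; rewrite ?tpermL ?tpermR.
- move: (Mrow ord3_0) (Mrow ord3_1) (Mrow ord3_2) (Mcol ord3_0) (Mcol ord3_1) (Mcol ord3_2).
  rewrite !sum_ord3 => row0 row1 row2 col0 col1 col2.
  have diag a b c' : a != b -> a != c' -> b != c' ->
      0 < M ord3_0 a -> 0 < M ord3_1 b -> 0 < M ord3_2 c' ->
      exists s : {perm 'I_3}, forall i, 0 < M i (s i).
    move=> neq_ab neq_ac neq_bc pa pb pc.
    have [s [sa sb sc]] := perm3_of_distinct neq_ab neq_ac neq_bc.
    by exists s => i; case: (ord3P i) => ->; rewrite ?sa ?sb ?sc.
  have := positive_diagonal3_real c_gt0 (M_ge0 _ _) (M_ge0 _ _) (M_ge0 _ _) (M_ge0 _ _)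
    (M_ge0 _ _) (M_ge0 _ _) (M_ge0 _ _) (M_ge0 _ _) (M_ge0 _ _)
    row0 row1 row2 col0 col1 col2.
  by case=> [|[|[|[|[|]]]]] [p [q r]]; apply: diag p q r.
Qed.

Lemma scaled_bistochastic_sub_perm n (M : 'M[R]_n) c (s : {perm 'I_n}) lam :
  scaled_bistochastic c M -> (forall i, lam <= M i (s i)) ->
  scaled_bistochastic (c - lam) (M - lam *: perm_mx s).
Proof.
move=> [M_ge0 Mrow Mcol] lam_le; have [[_ Prow Pcol] _] := deterministic_perm_mx R s.
have E i j : (M - lam *: perm_mx s) i j = M i j - lam * perm_mx s i j by rewrite !mxE.
split=> [i j|i|j].
- rewrite E perm_mxE; have [<-|_] := eqVneq (s i) j; last by rewrite mulr0 subr0.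
  by rewrite mulr1 subr_ge0.
- by under eq_bigr do rewrite E; rewrite sumrB -mulr_sumr Prow mulr1 Mrow.
- by under eq_bigr do rewrite E; rewrite sumrB -mulr_sumr Pcol mulr1 Mcol.
Qed.

Definition perm_decomposition n (M : 'M[R]_n) c (d : seq (R * {perm 'I_n})) : Prop :=
  [/\ forall p, p \in d -> 0 <= p.1, \sum_(p <- d) p.1 = c,
      forall p, p \in d -> forall i, 0 < M i (p.2 i)
    & M = \sum_(p <- d) p.1 *: perm_mx p.2].

Lemma perm_decomposition_zero n (M : 'M[R]_n) c : 0 <= c ->
  scaled_bistochastic c M -> (forall i j, M i j <= 0) -> exists d, perm_decomposition M c d.
Proof.
move=> c_ge0 [M_ge0 Mrow _] M_le0.
have M0 i j : M i j = 0 by apply/le_anti; rewrite M_le0 M_ge0.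
have [c0|c_neq0] := eqVneq c 0.
  exists [::]; split=> //; rewrite big_nil //.
  by apply/matrixP => i j; rewrite M0 mxE.
have no_row (i : 'I_n) : False.
  by move: c_neq0; rewrite -(Mrow i) big1 ?eqxx.
exists [:: (c, 1%g)]; split.
- by move=> p /[!inE]/eqP->.
- by rewrite big_seq1.
- by move=> p _ i; case: (no_row i).
- by apply/matrixP => i; case: (no_row i).
Qed.

Lemma birkhoff_le3 n (M : 'M[R]_n) c : (n <= 3)%N -> 0 <= c ->
  scaled_bistochastic c M -> exists d, perm_decomposition M c d.
Proof.
move=> le_n3; pose supp (A : 'M[R]_n) := [set p | 0 < A p.1 p.2].
suff: forall k A c, (#|supp A| < k)%N -> 0 <= c -> scaled_bistochastic c A ->
        exists d, perm_decomposition A c d by apply.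
elim=> // k IHk {}M {}c supp_lt c_ge0 Mbis.
have [supp0|[[i0 j0]]] := set_0Vmem (supp M).
  apply: perm_decomposition_zero => // i j; rewrite leNgt; apply/negP => pos.
  by move: (in_set0 (i, j)); rewrite -supp0 inE pos.
rewrite inE /= => pos0; have [M_ge0 Mrow _] := Mbis.
have c_gt0 : 0 < c by rewrite -(Mrow i0) (bigD1 j0) //= ltr_pwDl ?sumr_ge0.
have [s s_pos] := positive_diagonal_le3 le_n3 c_gt0 Mbis.
have [j _ j_min] := arg_minP (fun i => M i (s i)) (isT : predT i0).
set lam := M j (s j) in j_min.
have lam_gt0 : 0 < lam := s_pos j.
have lam_le_c : lam <= c by rewrite -(Mrow j) (bigD1 (s j)) //= lerDl sumr_ge0.
have M'bis := scaled_bistochastic_sub_perm Mbis (fun i => j_min i isT).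
have M'_le i h : (M - lam *: perm_mx s) i h <= M i h.
  by rewrite !mxE lerBlDr lerDl mulr_ge0 ?ler0n ?ltW.
have supp_sub : supp (M - lam *: perm_mx s) \proper supp M.
  apply/properP; split.
    by apply/subsetP => -[i h]; rewrite !inE => /lt_le_trans; apply.
  by exists (j, s j); rewrite !inE //= !mxE eqxx mulr1n mulr1 subrr ltxx.
have [||d [d_ge0 d_sum d_pos Ed]] := IHk _ (c - lam) _ _ M'bis.
- by move: supp_lt; rewrite ltnS; apply: leq_trans (proper_card supp_sub).
- by rewrite subr_ge0.
exists ((lam, s) :: d); split.
- by move=> p /[!inE] /predU1P[->|/d_ge0//]; apply: ltW.
- by rewrite big_cons d_sum addrC subrK.
- move=> p /[!inE] /predU1P[-> //|p_d i].
  exact: lt_le_trans (d_pos p p_d i) (M'_le _ _).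
- by rewrite big_cons -Ed addrC subrK.
Qed.

End Birkhoff.

Theorem mainTheorem1 (R : realFieldType) (n : nat) (f : profile n -> 'M[R]_n) :
  (n <= 3)%N ->
  (forall P, bistochastic (f P)) ->
  (support_efficient f <-> ex_post_efficient f).
Proof.
move=> le_n3 f_bis; split=> [f_supp P | f_ep P i h /RSD_eq0 no_pick].
  have [d [d_ge0 d_sum d_pos Ed]] := birkhoff_le3 le_n3 ler01 (f_bis P).
  exists [seq (p.1, perm_mx p.2) | p <- d]; rewrite !big_map; split=> // _ /mapP[p p_d ->].
    exact: d_ge0.
  apply/efficient_at_perm_mx/sd_supported_pareto => // i.
  have /existsP[pi] : [exists pi, (i, p.2 i) \in sd_picks P pi]; last by exists pi.
  apply: contraT => /existsPn/RSD_eq0/f_supp fP0.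
  by move: (d_pos p p_d i); rewrite fP0 ltxx.
have [d [_ _ d_eff ->]] := f_ep P.
rewrite summxE big1_seq // => p /andP[_ p_d]; rewrite mxE.
have [/deterministic_perm_mxP[s Es] _] := d_eff p p_d.
move: (d_eff p p_d); rewrite Es => /efficient_at_perm_mx/pareto_sd_reachable/(_ i)[pi].
rewrite perm_mxE; have [Esh pick_pi|_ _] := eqVneq (s i) h; last by rewrite mulr0.
by move: (no_pick pi); rewrite -Esh pick_pi.
Qed.
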